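(* Let $\alpha\in(0,\tfrac12)$ and $0<c<C'$. For $N=|\{k\in\mathbb{Z}^2:|k|<k_{\mathrm F}\}|$, consider the annulus $\mathcal A=\{p\in\mathbb{R}^2:k_{\mathrm F}\le|p|<k_{\mathrm F}+\Delta\}$ with thickness $\Delta$ satisfying $cN^{-\alpha}<\Delta<C'N^{-\alpha}$. Then there is a constant $C>0$ (independent of $N$, $\Delta$ and $k$) such that for all $k\in\mathbb{Z}^2\setminus\{0\}$, $$|\mathcal A\cap(\mathcal A+k)\cap\mathbb{Z}^2|\le C\big(N^{\frac34-\frac52\alpha}+N^{\frac14-\frac12\alpha}\big).$$
   Context: $k_{\mathrm F}>0$ is the Fermi momentum with $B_{\mathrm F}=\{k\in\mathbb{Z}^2:|k|<k_{\mathrm F}\}$, $N=|B_{\mathrm F}|$, and $k_{\mathrm F}^2=\frac12(\inf_{p\notin B_{\mathrm F}}|p|^2+\sup_{q\in B_{\mathrm F}}|q|^2)$ (so $k_{\mathrm F}\sim N^{1/2}$). *)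

From Stdlib Require Import Reals Lra ZArith List.
Open Scope R_scope.

Definition pt := (Z * Z)%type.
Definition norm2 (p : pt) : R := IZR (fst p) ^ 2 + IZR (snd p) ^ 2.
Definition pnorm (p : pt) : R := sqrt (norm2 p).
Definition psub (p k : pt) : pt := ((fst p - fst k)%Z, (snd p - snd k)%Z).

Definition in_BF (kF : R) (p : pt) : Prop := pnorm p < kF.

Definition is_glb (E : R -> Prop) (m : R) : Prop :=
  (forall x, E x -> m <= x) /\ (forall b, (forall x, E x -> b <= x) -> b <= m).

Definition fermi_convention (kF : R) : Prop :=
  0 < kF /\
  exists m_out m_in : R,
    is_glb (fun x => exists p, ~ in_BF kF p /\ x = pnorm p ^ 2) m_out /\
    is_lub (fun x => exists q, in_BF kF q /\ x = pnorm q ^ 2) m_in /\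
    kF ^ 2 = (m_out + m_in) / 2.

Definition card_BF (kF : R) (N : nat) : Prop :=
  exists l : list pt, NoDup l /\ (forall p, In p l <-> in_BF kF p) /\ length l = N.

Definition in_annulus (kF Delta : R) (p : pt) : Prop :=
  kF <= pnorm p < kF + Delta.

Definition in_AAk (kF Delta : R) (k p : pt) : Prop :=
  in_annulus kF Delta p /\ in_annulus kF Delta (psub p k).

From Stdlib Require Import Reals Lra Lia ZArith List Psatz.
Open Scope R_scope.

(* Let q = |k|, t = k.p and s = k x p, so that (t, s) / q are the coordinates of p in an
   orthonormal frame adapted to k, in which distinct lattice points stay at distance >= 1.
   For p in A ∩ (A + k), both |p|^2 and |p - k|^2 lie in [kF^2, kF^2 + L) with
   L = 2 kF Δ + Δ^2; hence |2t - q^2| < L, and s^2 = q^2 |p|^2 - t^2 varies by at most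
   2 q^2 L + L^2.  Fix the sign of s.
   - If q^2 <= L, the integer s takes O(L^2 / kF) values, and on each line s = const the
     coordinate t / q (of fixed sign) varies by at most sqrt L.
   - If q^2 > L, the points fit in a box of size O(sqrt L) x O(1) (when q <= kF) or
     O(1) x O(sqrt L) (when q > kF) of the rotated frame, and half-unit cells separate them.
   The count is therefore O(L^(5/2) / kF + sqrt L + 1), which is the claimed bound since
   kF ~ N^(1/2) and Δ ~ N^(-α).  When kF or N is bounded, counting lattice points in a
   box suffices. *)

Definition Zinterval (lo hi : Z) : list Z :=
  map (fun i => (lo + Z.of_nat i)%Z) (seq 0 (Z.to_nat (hi - lo + 1))).

Lemma In_Zinterval (lo hi z : Z) : (lo <= z <= hi)%Z -> In z (Zinterval lo hi).
Proof.
  intros Hz; apply in_map_iff; exists (Z.to_nat (z - lo)).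
  split; [lia | apply in_seq; lia].
Qed.

Lemma length_Zinterval (lo hi : Z) : length (Zinterval lo hi) = Z.to_nat (hi - lo + 1).
Proof. unfold Zinterval; now rewrite length_map, length_seq. Qed.

Lemma length_le_1_of_const {A} (m : list A) :
  NoDup m -> (forall x y, In x m -> In y m -> x = y) -> (length m <= 1)%nat.
Proof.
  destruct m as [|x [|y m]]; simpl; intros Hn Heq; try lia.
  apply NoDup_cons_iff in Hn as [Hx _].
  exfalso; apply Hx; left; apply Heq; [right; left | left]; reflexivity.
Qed.

Lemma Zabs_lt_up_of_Rabs_le (d : Z) (W : R) : Rabs (IZR d) <= W -> (Z.abs d < up W)%Z.
Proof.
  intros Hd; apply lt_IZR; rewrite abs_IZR; destruct (archimed W); lra.
Qed.

Section Fibers.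
Context {A : Type} (f : A -> Z).

Definition fibers_bounded (l : list A) (B : R) : Prop :=
  forall j m, NoDup m -> incl m l -> (forall x, In x m -> f x = j) -> INR (length m) <= B.

Lemma length_le_fibers (ks : list Z) (B : R) (l : list A) :
  0 <= B -> NoDup l -> (forall x, In x l -> In (f x) ks) -> fibers_bounded l B ->
  INR (length l) <= INR (length ks) * B.
Proof.
  revert l; induction ks as [|j ks IH]; intros l HB Hl Hks Hfib.
  { destruct l as [|x l]; [simpl; lra | destruct (Hks x (in_eq _ _))]. }
  rewrite <- (filter_length (fun x => (f x =? j)%Z) l), plus_INR.
  simpl length; rewrite S_INR.
  assert (Hj : INR (length (filter (fun x => (f x =? j)%Z) l)) <= B).
  { apply (Hfib j); [now apply NoDup_filter | | ].
    - intros x Hx; now apply filter_In in Hx.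
    - intros x Hx; apply filter_In in Hx as [_ E]; now apply Z.eqb_eq. }
  assert (INR (length (filter (fun x => negb (f x =? j)%Z) l)) <= INR (length ks) * B).
  { apply IH; [easy | now apply NoDup_filter | |].
    - intros x Hx; apply filter_In in Hx as [Hx E].
      destruct (Hks x Hx) as [Ej | ?]; [subst j; now rewrite Z.eqb_refl in E | easy].
    - intros j' m Hm Hml; apply Hfib; [easy |].
      intros x Hx; now apply Hml, filter_In in Hx. }
  lra.
Qed.

Definition key_spread (l : list A) (W : R) : Prop :=
  forall x y, In x l -> In y l -> Rabs (IZR (f x) - IZR (f y)) <= W.

Lemma length_le_key_spread (W B : R) (l : list A) :
  0 <= W -> 0 <= B -> NoDup l -> key_spread l W -> fibers_bounded l B ->
  INR (length l) <= (2 * W + 1) * B.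
Proof.
  intros HW HB Hl Hspread Hfib; destruct l as [|x0 l']; [simpl; nra |].
  (* [w] is the largest integer [<= W]. *)
  set (w := (up W - 1)%Z).
  assert (Hw : IZR w <= W) by (unfold w; rewrite minus_IZR; destruct (archimed W); lra).
  assert (Hw0 : (0 <= w)%Z).
  { assert (0 < up W)%Z by (apply lt_IZR; destruct (archimed W); lra); lia. }
  assert (Hlen : INR (length (Zinterval (f x0 - w) (f x0 + w))) = 2 * IZR w + 1).
  { rewrite length_Zinterval, INR_IZR_INZ, Z2Nat.id by lia.
    replace (f x0 + w - (f x0 - w) + 1)%Z with (2 * w + 1)%Z by ring.
    now rewrite plus_IZR, mult_IZR. }
  assert (HB' : INR (length (x0 :: l')) <= (2 * IZR w + 1) * B).
  { rewrite <- Hlen; apply length_le_fibers; [easy | easy | | easy].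
    intros x Hx; apply In_Zinterval.
    assert (Hd := Hspread x x0 Hx (in_eq _ _)); rewrite <- minus_IZR in Hd.
    apply Zabs_lt_up_of_Rabs_le in Hd; lia. }
  nra.
Qed.

End Fibers.

Lemma length_le_injective_key {A} (f : A -> Z) (W : R) (l : list A) :
  0 <= W -> NoDup l -> key_spread f l W ->
  (forall x y, In x l -> In y l -> f x = f y -> x = y) ->
  INR (length l) <= 2 * W + 1.
Proof.
  intros HW Hl Hspread Hinj; rewrite <- (Rmult_1_r (2 * W + 1)).
  apply (length_le_key_spread f); [easy | lra | easy | easy |].
  intros j m Hm Hml Hj; change 1 with (INR 1); apply le_INR, length_le_1_of_const; [easy |].
  intros x y Hx Hy; apply Hinj; [now apply Hml | now apply Hml |].
  now rewrite (Hj x Hx), (Hj y Hy).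
Qed.

Lemma length_le_grid {A} (f g : A -> Z) (W1 W2 : R) (l : list A) :
  0 <= W1 -> 0 <= W2 -> NoDup l -> key_spread f l W1 -> key_spread g l W2 ->
  (forall x y, In x l -> In y l -> f x = f y -> g x = g y -> x = y) ->
  INR (length l) <= (2 * W1 + 1) * (2 * W2 + 1).
Proof.
  intros HW1 HW2 Hl Hf Hg Hinj.
  apply (length_le_key_spread f); [easy | lra | easy | easy |].
  intros j m Hm Hml Hj; apply (length_le_injective_key g); [easy | easy | |].
  - intros x y Hx Hy; apply Hg; now apply Hml.
  - intros x y Hx Hy; apply Hinj; [now apply Hml | now apply Hml |].
    now rewrite (Hj x Hx), (Hj y Hy).
Qed.

Lemma length_le_sign_split {A} (f : A -> Z) (B : R) (l : list A) :
  NoDup l ->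
  (forall m, NoDup m -> incl m l ->
     (forall x y, In x m -> In y m -> 0 <= IZR (f x) * IZR (f y)) -> INR (length m) <= B) ->
  INR (length l) <= 2 * B.
Proof.
  intros Hl Hsign.
  rewrite <- (filter_length (fun x => (0 <=? f x)%Z) l), plus_INR.
  assert (INR (length (filter (fun x => (0 <=? f x)%Z) l)) <= B).
  { apply Hsign; [now apply NoDup_filter | intros x Hx; now apply filter_In in Hx |].
    intros x y Hx Hy; apply filter_In in Hx as [_ Hx]; apply filter_In in Hy as [_ Hy].
    apply Z.leb_le, IZR_le in Hx; apply Z.leb_le, IZR_le in Hy; nra. }
  assert (INR (length (filter (fun x => negb (0 <=? f x)%Z) l)) <= B).
  { apply Hsign; [now apply NoDup_filter | intros x Hx; now apply filter_In in Hx |].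
    intros x y Hx Hy; apply filter_In in Hx as [_ Hx]; apply filter_In in Hy as [_ Hy].
    apply Bool.negb_true_iff, Z.leb_gt, IZR_lt in Hx.
    apply Bool.negb_true_iff, Z.leb_gt, IZR_lt in Hy; nra. }
  lra.
Qed.

Lemma Rabs_up_sub_le (x y : R) : Rabs (IZR (up x) - IZR (up y)) <= Rabs (x - y) + 1.
Proof.
  destruct (archimed x), (archimed y).
  unfold Rabs; destruct (Rcase_abs (x - y)), (Rcase_abs (IZR (up x) - IZR (up y))); lra.
Qed.

Lemma Rabs_sub_lt_1_of_up_eq (x y : R) : up x = up y -> Rabs (x - y) < 1.
Proof.
  intros E; destruct (archimed x), (archimed y); rewrite E in *.
  unfold Rabs; destruct (Rcase_abs (x - y)); lra.
Qed.

Lemma pow2_sub_le_Rabs_pow2_sub (a b : R) : 0 <= a * b -> (a - b) ^ 2 <= Rabs (a ^ 2 - b ^ 2).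
Proof. intros Hab; unfold Rabs; destruct (Rcase_abs (a ^ 2 - b ^ 2)); nra. Qed.

Lemma Rabs_le_of_pow2_le (a b : R) : 0 <= b -> a ^ 2 <= b ^ 2 -> Rabs a <= b.
Proof.
  intros Hb H; rewrite <- (Rabs_pos_eq b Hb).
  apply Rsqr_le_abs_0; now rewrite !Rsqr_pow2.
Qed.

Lemma Rabs_sub_le_sq_div (a b S : R) :
  0 <= a * b -> 0 < S <= Rabs a + Rabs b -> Rabs (a - b) <= Rabs (a ^ 2 - b ^ 2) / S.
Proof.
  intros Hab HS; apply Rmult_le_reg_r with S; [lra |].
  unfold Rdiv; rewrite Rmult_assoc, Rinv_l, Rmult_1_r by lra.
  replace (a ^ 2 - b ^ 2) with ((a - b) * (a + b)) by ring.
  rewrite Rabs_mult; apply Rmult_le_compat_l; [apply Rabs_pos |].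
  enough (Rabs (a + b) = Rabs a + Rabs b) by lra.
  unfold Rabs; destruct (Rcase_abs a), (Rcase_abs b), (Rcase_abs (a + b)); nra.
Qed.

Definition dot (k p : pt) : Z := (fst k * fst p + snd k * snd p)%Z.
Definition cross (k p : pt) : Z := (fst k * snd p - snd k * fst p)%Z.

Lemma norm2_psub (p k : pt) : norm2 (psub p k) = norm2 p - 2 * IZR (dot k p) + norm2 k.
Proof. unfold norm2, psub, dot; simpl; rewrite !minus_IZR, plus_IZR, !mult_IZR; ring. Qed.

Lemma dot_cross_sq (k p : pt) : IZR (dot k p) ^ 2 + IZR (cross k p) ^ 2 = norm2 k * norm2 p.
Proof. unfold norm2, dot, cross; rewrite plus_IZR, minus_IZR, !mult_IZR; ring. Qed.

Lemma dot_cross_sub_sq (k p p' : pt) :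
  (IZR (dot k p) - IZR (dot k p')) ^ 2 + (IZR (cross k p) - IZR (cross k p')) ^ 2
  = norm2 k * norm2 (psub p p').
Proof. unfold norm2, psub, dot, cross; simpl; rewrite !plus_IZR, !minus_IZR, !mult_IZR; ring. Qed.

Lemma norm2_nonneg (p : pt) : 0 <= norm2 p.
Proof. unfold norm2; nra. Qed.

Lemma norm2_ge_1 (p : pt) : p <> (0%Z, 0%Z) -> 1 <= norm2 p.
Proof.
  destruct p as [a b]; intros Hp; unfold norm2; simpl.
  assert (H : (1 <= a * a + b * b)%Z).
  { destruct (Z.eq_dec a 0), (Z.eq_dec b 0); subst; [now contradiction Hp | nia ..]. }
  apply IZR_le in H; rewrite plus_IZR, !mult_IZR in H; lra.
Qed.

Lemma eq_of_dot_cross_close (k p p' : pt) :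
  (IZR (dot k p) - IZR (dot k p')) ^ 2 + (IZR (cross k p) - IZR (cross k p')) ^ 2 < norm2 k ->
  p = p'.
Proof.
  rewrite dot_cross_sub_sq; intros H.
  destruct p as [a b], p' as [a' b'].
  destruct (Z.eq_dec a a'), (Z.eq_dec b b'); [now subst | ..];
    (assert (Hd : norm2 (psub (a, b) (a', b')) >= 1)
       by (apply Rle_ge, norm2_ge_1; unfold psub; simpl; intros E; injection E; lia));
    assert (Hk := Rmult_le_compat_l _ _ _ (norm2_nonneg k) (Rge_le _ _ Hd)); lra.
Qed.

(* Index of the strip of width [1/2] containing [z / |k|]. *)
Definition cell (k : pt) (z : Z) : Z := up (2 * IZR z / sqrt (norm2 k)).

Lemma cell_sub (k : pt) (a b : Z) :
  0 < norm2 k ->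
  2 * IZR a / sqrt (norm2 k) - 2 * IZR b / sqrt (norm2 k)
  = 2 * (IZR a - IZR b) / sqrt (norm2 k).
Proof. intros Hk; field; apply Rgt_not_eq, sqrt_lt_R0, Hk. Qed.

Lemma cell_spread (k : pt) (a b : Z) (W : R) :
  0 < norm2 k -> 2 * Rabs (IZR a - IZR b) <= W * sqrt (norm2 k) ->
  Rabs (IZR (cell k a) - IZR (cell k b)) <= W + 1.
Proof.
  intros Hk H; assert (Hq := sqrt_lt_R0 _ Hk).
  eapply Rle_trans; [apply Rabs_up_sub_le | apply Rplus_le_compat_r].
  rewrite cell_sub by easy; unfold Rdiv.
  rewrite Rabs_mult, Rabs_mult, Rabs_inv, (Rabs_pos_eq 2), (Rabs_pos_eq (sqrt _)) by lra.
  apply Rmult_le_reg_r with (sqrt (norm2 k)); [easy |].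
  rewrite Rmult_assoc, Rinv_l by lra; lra.
Qed.

Lemma cell_eq_close (k : pt) (a b : Z) :
  0 < norm2 k -> cell k a = cell k b -> 2 * Rabs (IZR a - IZR b) < sqrt (norm2 k).
Proof.
  intros Hk E; assert (Hq := sqrt_lt_R0 _ Hk).
  apply Rabs_sub_lt_1_of_up_eq in E; rewrite cell_sub in E by easy; unfold Rdiv in E.
  rewrite Rabs_mult, Rabs_mult, Rabs_inv, (Rabs_pos_eq 2), (Rabs_pos_eq (sqrt _)) in E by lra.
  apply Rmult_lt_reg_r with (/ sqrt (norm2 k)); [now apply Rinv_0_lt_compat |].
  rewrite Rinv_r by lra; lra.
Qed.

Lemma eq_of_cells_eq (k p p' : pt) :
  k <> (0%Z, 0%Z) ->
  cell k (dot k p) = cell k (dot k p') -> cell k (cross k p) = cell k (cross k p') -> p = p'.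
Proof.
  intros Hk Ed Ec; assert (HQ := norm2_ge_1 k Hk).
  apply (cell_eq_close k _ _ ltac:(lra)) in Ed, Ec.
  apply (eq_of_dot_cross_close k).
  assert (Hq := sqrt_sqrt (norm2 k) ltac:(lra)).
  rewrite <- (pow2_abs (IZR (dot k p) - _)), <- (pow2_abs (IZR (cross k p) - _)).
  set (a := Rabs (IZR (dot k p) - IZR (dot k p'))) in *.
  set (b := Rabs (IZR (cross k p) - IZR (cross k p'))) in *.
  set (q := sqrt (norm2 k)) in *.
  assert (Ha : 0 <= a) by apply Rabs_pos; assert (Hb : 0 <= b) by apply Rabs_pos.
  assert (2 * a * (2 * a) < q * q) by (apply Rmult_le_0_lt_compat; lra).
  assert (2 * b * (2 * b) < q * q) by (apply Rmult_le_0_lt_compat; lra).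
  simpl; lra.
Qed.

Definition in_lens (kF L : R) (k p : pt) : Prop :=
  kF ^ 2 <= norm2 p < kF ^ 2 + L /\ kF ^ 2 <= norm2 (psub p k) < kF ^ 2 + L.

Lemma pow2_window_of_sqrt (r D n : R) :
  0 <= r -> 0 <= n -> r <= sqrt n < r + D -> r ^ 2 <= n < r ^ 2 + (2 * r * D + D ^ 2).
Proof.
  intros Hr Hn Hs; rewrite <- (sqrt_sqrt n Hn); assert (0 <= sqrt n) by apply sqrt_pos.
  split; nra.
Qed.

Lemma in_AAk_lens (kF D : R) (k p : pt) :
  0 <= kF -> in_AAk kF D k p -> in_lens kF (2 * kF * D + D ^ 2) k p.
Proof.
  intros HkF [Hp Hpk]; split; apply pow2_window_of_sqrt; auto using norm2_nonneg.
Qed.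

Section Lens.
Variables (kF L : R) (k : pt).
Hypotheses (HkF : 2 <= kF) (HL : 0 < L) (HLR : L <= kF / 2) (Hk : k <> (0%Z, 0%Z)).

Lemma lens_dot_window (x : pt) :
  in_lens kF L k x -> norm2 k - L < 2 * IZR (dot k x) < norm2 k + L.
Proof. intros [Hx Hxk]; rewrite norm2_psub in Hxk; lra. Qed.

Lemma lens_dot_spread (x y : pt) :
  in_lens kF L k x -> in_lens kF L k y -> Rabs (IZR (dot k x) - IZR (dot k y)) < L.
Proof.
  intros Hx Hy; apply lens_dot_window in Hx, Hy.
  unfold Rabs; destruct (Rcase_abs (IZR (dot k x) - IZR (dot k y))); lra.
Qed.

Lemma lens_cross_sq_spread (x y : pt) :
  in_lens kF L k x -> in_lens kF L k y ->
  Rabs (IZR (cross k x) ^ 2 - IZR (cross k y) ^ 2) <= 2 * norm2 k * L + L ^ 2.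
Proof.
  intros Hx Hy.
  assert (Hsx := dot_cross_sq k x); assert (Hsy := dot_cross_sq k y).
  assert (HQ := norm2_nonneg k).
  assert (Hn : Rabs (norm2 x - norm2 y) <= L).
  { destruct Hx as [Hx _], Hy as [Hy _].
    unfold Rabs; destruct (Rcase_abs (norm2 x - norm2 y)); lra. }
  assert (Ht : Rabs (IZR (dot k x) ^ 2 - IZR (dot k y) ^ 2) <= L * (norm2 k + L)).
  { replace (IZR (dot k x) ^ 2 - IZR (dot k y) ^ 2)
      with ((IZR (dot k x) - IZR (dot k y)) * (IZR (dot k x) + IZR (dot k y))) by ring.
    rewrite Rabs_mult; apply Rmult_le_compat; try apply Rabs_pos.
    - now apply Rlt_le, lens_dot_spread.
    - apply lens_dot_window in Hx, Hy.
      unfold Rabs; destruct (Rcase_abs (IZR (dot k x) + IZR (dot k y))); lra. }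
  replace (IZR (cross k x) ^ 2 - IZR (cross k y) ^ 2)
    with (norm2 k * (norm2 x - norm2 y) - (IZR (dot k x) ^ 2 - IZR (dot k y) ^ 2)) by lra.
  eapply Rle_trans; [apply Rabs_triang |].
  rewrite Rabs_Ropp, Rabs_mult, (Rabs_pos_eq (norm2 k)) by easy.
  nra.
Qed.

Lemma lens_cross_sq_lower (x : pt) :
  norm2 k <= kF ^ 2 -> in_lens kF L k x -> norm2 k * kF ^ 2 / 4 <= IZR (cross k x) ^ 2.
Proof.
  intros HQR Hx; assert (HQ := norm2_ge_1 k Hk); assert (Hs := dot_cross_sq k x).
  assert (Ht : (2 * IZR (dot k x)) ^ 2 <= (norm2 k + L) ^ 2).
  { apply lens_dot_window in Hx; apply pow_maj_Rabs.
    unfold Rabs; destruct (Rcase_abs (2 * IZR (dot k x))); lra. }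
  assert (HQ2 : norm2 k * norm2 k <= norm2 k * kF ^ 2) by (apply Rmult_le_compat_l; lra).
  assert (HQL : norm2 k * (2 * L) <= norm2 k * kF) by (apply Rmult_le_compat_l; lra).
  assert (HQR2 : norm2 k * kF * 2 <= norm2 k * kF * kF) by (apply Rmult_le_compat_l; nra).
  assert (HL2 : L * L <= kF * kF / 4) by nra.
  destruct Hx as [[Hx _] _].
  assert (HQn : norm2 k * kF ^ 2 <= norm2 k * norm2 x) by (apply Rmult_le_compat_l; lra).
  simpl in *; nra.
Qed.

Lemma lens_cross_spread_le_div (x y : pt) :
  norm2 k <= kF ^ 2 -> in_lens kF L k x -> in_lens kF L k y ->
  0 <= IZR (cross k x) * IZR (cross k y) ->
  Rabs (IZR (cross k x) - IZR (cross k y))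
    <= (2 * norm2 k * L + L ^ 2) / (sqrt (norm2 k) * kF).
Proof.
  intros HQR Hx Hy Hsign; assert (HQ := norm2_ge_1 k Hk).
  assert (Hq : sqrt (norm2 k) ^ 2 = norm2 k) by (apply pow2_sqrt; lra).
  assert (Hq0 : 0 < sqrt (norm2 k)) by (apply sqrt_lt_R0; lra).
  assert (Hlow : forall z, in_lens kF L k z -> sqrt (norm2 k) * kF / 2 <= Rabs (IZR (cross k z))).
  { intros z Hz; apply lens_cross_sq_lower in Hz; [| easy].
    rewrite <- (Rabs_pos_eq (sqrt (norm2 k) * kF / 2)) by nra.
    apply Rsqr_le_abs_0; rewrite !Rsqr_pow2; nra. }
  apply Rle_trans with (Rabs (IZR (cross k x) ^ 2 - IZR (cross k y) ^ 2) / (sqrt (norm2 k) * kF)).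
  - apply Rabs_sub_le_sq_div; [easy | split; [nra |]].
    assert (Hlx := Hlow x Hx); assert (Hly := Hlow y Hy); lra.
  - apply Rmult_le_compat_r; [apply Rlt_le, Rinv_0_lt_compat; nra |].
    now apply lens_cross_sq_spread.
Qed.

Lemma lens_cross_sub_sq_le (x y : pt) :
  in_lens kF L k x -> in_lens kF L k y -> 0 <= IZR (cross k x) * IZR (cross k y) ->
  (IZR (cross k x) - IZR (cross k y)) ^ 2 <= 2 * norm2 k * L + L ^ 2.
Proof.
  intros Hx Hy Hsign; eapply Rle_trans; [now apply pow2_sub_le_Rabs_pow2_sub |].
  now apply lens_cross_sq_spread.
Qed.

Lemma lens_dot_spread_on_line (x y : pt) :
  in_lens kF L k x -> in_lens kF L k y -> cross k x = cross k y ->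
  0 <= IZR (dot k x) * IZR (dot k y) ->
  (IZR (dot k x) - IZR (dot k y)) ^ 2 <= norm2 k * L.
Proof.
  intros Hx Hy Hs Hsign; eapply Rle_trans; [now apply pow2_sub_le_Rabs_pow2_sub |].
  assert (Hsx := dot_cross_sq k x); assert (Hsy := dot_cross_sq k y).
  rewrite Hs in Hsx.
  replace (IZR (dot k x) ^ 2 - IZR (dot k y) ^ 2) with (norm2 k * (norm2 x - norm2 y)) by lra.
  rewrite Rabs_mult, (Rabs_pos_eq (norm2 k)) by apply norm2_nonneg.
  apply Rmult_le_compat_l; [apply norm2_nonneg |].
  destruct Hx as [Hx _], Hy as [Hy _].
  unfold Rabs; destruct (Rcase_abs (norm2 x - norm2 y)); lra.
Qed.

Section HalfLens.
Variable m : list pt.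
Hypotheses (Hm : NoDup m) (Hm_lens : forall x, In x m -> in_lens kF L k x)
  (Hm_sign : forall x y, In x m -> In y m -> 0 <= IZR (cross k x) * IZR (cross k y)).

Lemma half_lens_count_short_k :
  norm2 k <= L -> INR (length m) <= (6 * L ^ 2 / kF + 1) * (8 * sqrt L + 6).
Proof.
  intros HQL; assert (HQ := norm2_ge_1 k Hk).
  assert (Hq0 : 1 <= sqrt (norm2 k)) by (rewrite <- sqrt_1; now apply sqrt_le_1_alt).
  assert (HsL := sqrt_pos L).
  replace ((6 * L ^ 2 / kF + 1) * (8 * sqrt L + 6))
    with ((2 * (3 * L ^ 2 / kF) + 1) * (2 * (2 * (2 * sqrt L + 1) + 1))) by (field; lra).
  apply (length_le_key_spread (cross k));
    [apply Rmult_le_pos, Rlt_le, Rinv_0_lt_compat; nra | nra | easy | |].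
  - intros x y Hx Hy.
    eapply Rle_trans; [apply lens_cross_spread_le_div; auto; nra |].
    apply Rmult_le_reg_r with (sqrt (norm2 k) * kF); [nra |].
    unfold Rdiv; rewrite Rmult_assoc, Rinv_l by nra.
    replace (3 * L ^ 2 * / kF * (sqrt (norm2 k) * kF)) with (3 * L ^ 2 * sqrt (norm2 k))
      by (field; lra).
    nra.
  - intros j m1 Hm1 Hm1m Hj; apply (length_le_sign_split (dot k)); [easy |].
    intros m2 Hm2 Hm2m Hsign.
    apply (length_le_injective_key (fun x => cell k (dot k x))); [nra | easy | |].
    + intros x y Hx Hy; apply cell_spread; [lra |].
      enough (Rabs (IZR (dot k x) - IZR (dot k y)) <= sqrt L * sqrt (norm2 k)) by lra.
      apply Rabs_le_of_pow2_le; [nra |].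
      rewrite Rpow_mult_distr, !pow2_sqrt by lra; rewrite Rmult_comm.
      apply lens_dot_spread_on_line; auto.
      now rewrite (Hj x (Hm2m x Hx)), (Hj y (Hm2m y Hy)).
    + intros x y Hx Hy Ed; apply (eq_of_cells_eq k); [easy | easy |].
      now rewrite (Hj x (Hm2m x Hx)), (Hj y (Hm2m y Hy)).
Qed.

Lemma half_lens_count_medium_k :
  L < norm2 k <= kF ^ 2 -> INR (length m) <= 9 * (4 * sqrt L + 3).
Proof.
  intros [HLQ HQR]; assert (HQ := norm2_ge_1 k Hk).
  assert (Hq : sqrt (norm2 k) ^ 2 = norm2 k) by (apply pow2_sqrt; lra).
  assert (Hq0 : 0 < sqrt (norm2 k)) by (apply sqrt_lt_R0; lra).
  assert (HLq : sqrt L <= sqrt (norm2 k)) by (apply sqrt_le_1_alt; lra).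
  assert (HL2 : sqrt L * sqrt L = L) by (apply sqrt_sqrt; lra).
  assert (HsL := sqrt_pos L).
  replace (9 * (4 * sqrt L + 3)) with ((2 * (2 * sqrt L + 1) + 1) * (2 * (3 + 1) + 1)) by ring.
  apply (length_le_grid (fun x => cell k (dot k x)) (fun x => cell k (cross k x)));
    [lra | lra | easy | | |].
  - intros x y Hx Hy; apply cell_spread; [lra |].
    assert (Rabs (IZR (dot k x) - IZR (dot k y)) < L) by (apply lens_dot_spread; auto).
    nra.
  - intros x y Hx Hy; apply cell_spread; [lra |].
    enough (Rabs (IZR (cross k x) - IZR (cross k y)) <= 3 / 2 * sqrt (norm2 k)) by lra.
    eapply Rle_trans; [apply lens_cross_spread_le_div; auto |].
    apply Rmult_le_reg_r with (sqrt (norm2 k) * kF); [nra |].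
    unfold Rdiv; rewrite Rmult_assoc, Rinv_l by nra.
    nra.
  - intros x y Hx Hy; now apply eq_of_cells_eq.
Qed.

Lemma half_lens_count_long_k :
  kF ^ 2 < norm2 k -> INR (length m) <= 5 * (8 * sqrt L + 3).
Proof.
  intros HRQ; assert (HQ : 0 < norm2 k) by nra.
  assert (Hq : sqrt (norm2 k) ^ 2 = norm2 k) by (apply pow2_sqrt; lra).
  assert (HRq : kF < sqrt (norm2 k)).
  { rewrite <- (sqrt_pow2 kF) by lra; apply sqrt_lt_1_alt; split; [nra | easy]. }
  assert (HL2 : sqrt L ^ 2 = L) by (apply pow2_sqrt; lra).
  assert (HsL := sqrt_pos L).
  replace (5 * (8 * sqrt L + 3)) with ((2 * (1 + 1) + 1) * (2 * (4 * sqrt L + 1) + 1)) by ring.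
  apply (length_le_grid (fun x => cell k (dot k x)) (fun x => cell k (cross k x)));
    [lra | lra | easy | | |].
  - intros x y Hx Hy; apply cell_spread; [lra |].
    assert (Rabs (IZR (dot k x) - IZR (dot k y)) < L) by (apply lens_dot_spread; auto).
    lra.
  - intros x y Hx Hy; apply cell_spread; [lra |].
    enough (Rabs (IZR (cross k x) - IZR (cross k y)) <= 2 * sqrt L * sqrt (norm2 k)) by lra.
    apply Rabs_le_of_pow2_le; [nra |].
    eapply Rle_trans; [apply lens_cross_sub_sq_le; auto |].
    rewrite !Rpow_mult_distr, HL2, Hq.
    assert (kF <= kF ^ 2) by (simpl; nra).
    assert (L * L <= L * norm2 k) by (apply Rmult_le_compat_l; lra).
    simpl; nra.
  - intros x y Hx Hy; now apply eq_of_cells_eq.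
Qed.

End HalfLens.

Lemma lens_count (l : list pt) :
  NoDup l -> (forall x, In x l -> in_lens kF L k x) ->
  INR (length l) <= 168 * (L ^ 2 * sqrt L / kF + sqrt L + 1).
Proof.
  intros Hl Hlens; replace 168 with (2 * 84) by ring; rewrite Rmult_assoc.
  apply (length_le_sign_split (cross k)); [easy |].
  intros m Hm Hml Hsign; assert (Hm_lens : forall x, In x m -> in_lens kF L k x) by auto.
  assert (HsL := sqrt_pos L).
  assert (Ha : 0 <= L ^ 2 / kF) by (apply Rmult_le_pos, Rlt_le, Rinv_0_lt_compat; nra).
  replace (L ^ 2 * sqrt L / kF) with (L ^ 2 / kF * sqrt L) by (field; lra).
  destruct (Rle_lt_dec (norm2 k) L) as [HQL | HLQ]; [| destruct (Rle_lt_dec (norm2 k) (kF ^ 2))].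
  - assert (HL1 : 1 <= sqrt L).
    { rewrite <- sqrt_1; apply sqrt_le_1_alt; assert (HQ := norm2_ge_1 k Hk); lra. }
    assert (Hc := half_lens_count_short_k m Hm Hm_lens Hsign HQL); nra.
  - assert (Hc := half_lens_count_medium_k m Hm Hm_lens Hsign (conj HLQ r)); nra.
  - assert (Hc := half_lens_count_long_k m Hm Hm_lens Hsign r); nra.
Qed.

End Lens.

Lemma in_AAk_count_thin (kF D : R) (k : pt) (l : list pt) :
  2 <= kF -> 0 < D <= 1 / 8 -> k <> (0%Z, 0%Z) -> NoDup l ->
  (forall p, In p l -> in_AAk kF D k p) ->
  INR (length l) <= 168 * ((2 * kF * D + D ^ 2) ^ 2 * sqrt (2 * kF * D + D ^ 2) / kF
                          + sqrt (2 * kF * D + D ^ 2) + 1).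
Proof.
  intros HkF HD Hk Hl Hlk; apply (lens_count kF _ k); [lra | nra | nra | easy | easy |].
  intros p Hp; apply in_AAk_lens; [lra | auto].
Qed.

Lemma length_le_box (B : R) (l : list pt) :
  0 <= B -> NoDup l ->
  (forall p, In p l -> Rabs (IZR (fst p)) <= B /\ Rabs (IZR (snd p)) <= B) ->
  INR (length l) <= (4 * B + 1) ^ 2.
Proof.
  intros HB Hl Hbox; replace ((4 * B + 1) ^ 2) with ((2 * (2 * B) + 1) * (2 * (2 * B) + 1)) by ring.
  apply (length_le_grid fst snd); [lra | lra | easy | | |].
  - intros x y Hx Hy; destruct (Hbox x Hx) as [Hbx _], (Hbox y Hy) as [Hby _].
    eapply Rle_trans; [apply Rabs_triang | rewrite Rabs_Ropp; lra].
  - intros x y Hx Hy; destruct (Hbox x Hx) as [_ Hbx], (Hbox y Hy) as [_ Hby].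
    eapply Rle_trans; [apply Rabs_triang | rewrite Rabs_Ropp; lra].
  - intros [a b] [a' b'] _ _; simpl; intros -> ->; reflexivity.
Qed.

Lemma in_AAk_coord_bound (kF D : R) (k p : pt) :
  0 < kF -> 0 < D -> in_AAk kF D k p ->
  Rabs (IZR (fst p)) <= kF + D /\ Rabs (IZR (snd p)) <= kF + D.
Proof.
  intros HkF HD [[_ Hp] _]; unfold pnorm in Hp.
  assert (Hn : norm2 p < (kF + D) ^ 2).
  { rewrite <- (sqrt_sqrt (norm2 p)) by apply norm2_nonneg.
    assert (Hs := sqrt_pos (norm2 p)); nra. }
  unfold norm2 in Hn; split; apply Rabs_le_of_pow2_le; nra.
Qed.

Lemma in_AAk_count_box (kF D : R) (k : pt) (l : list pt) :
  0 < kF -> 0 < D -> NoDup l -> (forall p, In p l -> in_AAk kF D k p) ->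
  INR (length l) <= (4 * (kF + D) + 1) ^ 2.
Proof.
  intros HkF HD Hl Hlk; apply length_le_box; [lra | easy |].
  intros p Hp; apply (in_AAk_coord_bound kF D k); auto.
Qed.

Lemma NoDup_list_prod {A B} (la : list A) (lb : list B) :
  NoDup la -> NoDup lb -> NoDup (list_prod la lb).
Proof.
  intros Ha Hb; induction Ha as [|a la Ha Hla IH]; simpl; [constructor |].
  apply NoDup_app; [| easy |].
  - apply NoDup_map_NoDup_ForallPairs; [| easy]; intros x y _ _ E; now injection E.
  - intros [x y] H1 H2; apply in_map_iff in H1 as [z [E _]]; injection E as <- <-.
    now apply in_prod_iff in H2.
Qed.

Lemma NoDup_Zinterval (lo hi : Z) : NoDup (Zinterval lo hi).
Proof.
  apply NoDup_map_NoDup_ForallPairs; [| apply seq_NoDup]; intros i j _ _ E; lia.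
Qed.

Lemma Zinterval_In (lo hi z : Z) : In z (Zinterval lo hi) -> (lo <= z <= hi)%Z.
Proof. intros Hz; apply in_map_iff in Hz as [i [<- Hi]]; apply in_seq in Hi; lia. Qed.

(* B_F contains the square [0, u)^2 with u = up (kF / 2) > kF / 2. *)
Lemma card_BF_lower (kF : R) (N : nat) :
  0 < kF -> card_BF kF N -> kF ^ 2 < 4 * INR N /\ 1 <= INR N.
Proof.
  intros HkF [lB [HlB [HinB <-]]].
  set (u := up (kF / 2)); destruct (archimed (kF / 2)) as [Hu1 Hu2]; fold u in Hu1, Hu2.
  assert (Hu : (1 <= u)%Z) by (assert (0 < u)%Z by (apply lt_IZR; lra); lia).
  set (side := Zinterval 0 (u - 1)).
  assert (Hside : forall z, In z side -> 0 <= IZR z <= kF / 2).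
  { intros z Hz; apply Zinterval_In in Hz.
    split; [apply IZR_le; lia |].
    assert (IZR z <= IZR (u - 1)) by (apply IZR_le; lia); rewrite minus_IZR in *; lra. }
  assert (Hsquare : incl (list_prod side side) lB).
  { intros [a b] Hab; apply in_prod_iff in Hab as [Ha Hb]; apply HinB.
    apply Hside in Ha; apply Hside in Hb.
    unfold in_BF, pnorm, norm2; simpl; rewrite <- (sqrt_pow2 kF) by lra.
    apply sqrt_lt_1_alt; split; nra. }
  apply NoDup_incl_length in Hsquare; [| apply NoDup_list_prod; apply NoDup_Zinterval].
  apply le_INR in Hsquare; rewrite length_prod, mult_INR in Hsquare.
  unfold side in Hsquare; rewrite length_Zinterval, INR_IZR_INZ, Z2Nat.id in Hsquare by lia.
  replace (u - 1 - 0 + 1)%Z with u in Hsquare by ring.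
  assert (Hu' : 1 <= IZR u) by (apply (IZR_le 1); lia).
  assert (kF * kF < (2 * IZR u) * (2 * IZR u)) by (apply Rmult_le_0_lt_compat; lra).
  change (@length (Z * Z) lB) with (@length pt lB) in Hsquare; split; nra.
Qed.

Lemma Rpower_pos (x y : R) : 0 < Rpower x y.
Proof. apply exp_pos. Qed.

Lemma Rpower_ge_1 (x y : R) : 1 <= x -> 0 <= y -> 1 <= Rpower x y.
Proof. intros Hx Hy; rewrite <- (Rpower_O x) at 1 by lra; now apply Rle_Rpower. Qed.

Lemma Rpower_le_1 (x y : R) : 1 <= x -> y <= 0 -> Rpower x y <= 1.
Proof. intros Hx Hy; rewrite <- (Rpower_O x) by lra; now apply Rle_Rpower. Qed.

Lemma lt_Rpower_of_lt_Rpower_opp (N alpha c : R) :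
  0 < alpha -> 0 < N -> 0 < c -> c < Rpower N (- alpha) -> N < Rpower (/ c) (/ alpha).
Proof.
  intros Ha HN Hc H; rewrite Rpower_Ropp in H.
  assert (HP := Rpower_pos N alpha).
  assert (Hlt : Rpower N alpha < / c).
  { rewrite <- (Rinv_inv (Rpower N alpha)).
    apply Rinv_lt_contravar; [| easy].
    apply Rmult_lt_0_compat; [easy | now apply Rinv_0_lt_compat]. }
  replace N with (Rpower (Rpower N alpha) (/ alpha)) at 1
    by (rewrite Rpower_mult, Rinv_r, Rpower_1 by lra; reflexivity).
  apply Rlt_Rpower_l; [now apply Rinv_0_lt_compat | lra].
Qed.

Lemma thin_shell_scaling (alpha C' N kF D : R) :
  0 <= alpha <= 1 / 2 -> 1 <= N -> 0 < kF -> kF ^ 2 < 4 * N -> 0 < D <= kF ->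
  D < C' * Rpower N (- alpha) ->
  let L := 2 * kF * D + D ^ 2 in
  L ^ 2 * sqrt L / kF + sqrt L + 1
  <= (18 * C' ^ 2 * sqrt (6 * C') + sqrt (6 * C') + 1)
     * (Rpower N (3 / 4 - 5 / 2 * alpha) + Rpower N (1 / 4 - 1 / 2 * alpha)).
Proof.
  intros Ha HN HkF HkN HD HDE L.
  set (E := Rpower N (- alpha)) in *.
  set (X := Rpower N (1 / 4 - 1 / 2 * alpha)); set (Y := Rpower N (3 / 4 - 5 / 2 * alpha)).
  assert (HE := Rpower_pos N (- alpha)); fold E in HE.
  assert (HX : 1 <= X) by (apply Rpower_ge_1; lra).
  assert (HXX : X * X = sqrt N * E).
  { unfold X, E; rewrite <- Rpower_plus, <- Rpower_sqrt, <- Rpower_plus by lra; f_equal; field. }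
  assert (HY : Y = X * X * X * E).
  { unfold Y, X, E; rewrite <- !Rpower_plus; f_equal; field. }
  assert (HC' : 0 < C') by nra.
  assert (HsN : kF < 2 * sqrt N).
  { rewrite <- (sqrt_pow2 kF) by lra.
    replace 2 with (sqrt (2 ^ 2)) at 1 by (rewrite sqrt_pow2; lra).
    rewrite <- sqrt_mult by lra; apply sqrt_lt_1_alt; nra. }
  assert (HsN0 := sqrt_pos N).
  assert (HL : 0 < L) by (unfold L; nra).
  assert (HkD : kF * D <= 2 * C' * (X * X)) by (rewrite HXX; nra).
  assert (HL3 : L <= 3 * (kF * D)) by (unfold L; nra).
  assert (Hs6 := sqrt_pos (6 * C')).
  assert (HsL : sqrt L <= sqrt (6 * C') * X).
  { rewrite <- (sqrt_pow2 X), <- sqrt_mult by nra; apply sqrt_le_1_alt; nra. }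
  assert (HL2 : L ^ 2 / kF <= 18 * C' ^ 2 * (X * X) * E).
  { apply Rmult_le_reg_r with kF; [easy |].
    unfold Rdiv; rewrite Rmult_assoc, Rinv_l, Rmult_1_r by lra.
    assert (kF * D * D <= 2 * C' * (X * X) * (C' * E)) by (apply Rmult_le_compat; nra).
    nra. }
  assert (HsL0 := sqrt_pos L).
  assert (L ^ 2 * sqrt L / kF <= 18 * C' ^ 2 * sqrt (6 * C') * Y).
  { replace (L ^ 2 * sqrt L / kF) with (L ^ 2 / kF * sqrt L) by (field; lra).
    rewrite HY; apply Rle_trans with (18 * C' ^ 2 * (X * X) * E * (sqrt (6 * C') * X));
      [| right; ring].
    apply Rmult_le_compat; [| easy | easy | easy].
    apply Rmult_le_pos, Rlt_le, Rinv_0_lt_compat; nra. }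
  assert (0 < Y) by apply Rpower_pos.
  nra.
Qed.

Lemma wide_shell_size_bound (alpha C' kF N D : R) :
  0 < alpha -> 1 <= N -> 0 < kF -> kF ^ 2 < 4 * N -> 0 < D < C' * Rpower N (- alpha) ->
  kF < 2 \/ 1 / 8 < D -> kF + D <= 4 * Rpower (8 * C') (/ alpha) + 2 + C'.
Proof.
  intros Ha HN HkF HkN HD Hwide; assert (HE := Rpower_pos N (- alpha)).
  assert (HM := Rpower_pos (8 * C') (/ alpha)).
  assert (HE1 : Rpower N (- alpha) <= 1) by (apply Rpower_le_1; lra).
  assert (HDC' : D < C') by nra.
  destruct Hwide as [HkF2 | HD8]; [lra |].
  assert (HNM : N < Rpower (8 * C') (/ alpha)).
  { rewrite <- (Rinv_inv (8 * C')); apply lt_Rpower_of_lt_Rpower_opp; [lra | lra | |].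
    - apply Rinv_0_lt_compat; lra.
    - apply Rmult_lt_reg_l with (8 * C'); [lra |]; rewrite Rinv_r by lra; nra. }
  assert (kF <= kF ^ 2 + 1) by nra.
  lra.
Qed.

Theorem lemmaA4 (alpha c C' : R) :
  0 < alpha < 1 / 2 -> 0 < c -> c < C' ->
  exists C : R, 0 < C /\
    forall (kF : R) (N : nat) (Delta : R) (k : pt),
      fermi_convention kF ->
      card_BF kF N ->
      c * Rpower (INR N) (- alpha) < Delta < C' * Rpower (INR N) (- alpha) ->
      k <> (0%Z, 0%Z) ->
      forall l : list pt, NoDup l -> (forall p, In p l -> in_AAk kF Delta k p) ->
        INR (length l) <=
          C * (Rpower (INR N) (3 / 4 - 5 / 2 * alpha)
               + Rpower (INR N) (1 / 4 - 1 / 2 * alpha)).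
Proof.
  intros Ha Hc HcC.
  set (K := 18 * C' ^ 2 * sqrt (6 * C') + sqrt (6 * C') + 1).
  set (B := 4 * Rpower (8 * C') (/ alpha) + 2 + C').
  assert (HK : 0 < K) by (assert (Hs := sqrt_pos (6 * C')); unfold K; nra).
  assert (HB : 0 < B) by (assert (HM := Rpower_pos (8 * C') (/ alpha)); unfold B; lra).
  exists (168 * K + (4 * B + 1) ^ 2); split; [nra |].
  intros kF N D k [HkF _] HN HD Hk l Hl Hlk.
  destruct (card_BF_lower kF N HkF HN) as [HkN HN1].
  assert (HX : 1 <= Rpower (INR N) (1 / 4 - 1 / 2 * alpha)) by (apply Rpower_ge_1; lra).
  assert (HY := Rpower_pos (INR N) (3 / 4 - 5 / 2 * alpha)).
  assert (HD0 : 0 < D) by (assert (Hc0 := Rpower_pos (INR N) (- alpha)); nra).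
  assert (Hregime : (2 <= kF /\ D <= 1 / 8) \/ kF + D <= B).
  { destruct (Rle_lt_dec 2 kF), (Rle_lt_dec D (1 / 8)); [now left | right ..];
      apply (wide_shell_size_bound alpha C' kF (INR N)); lra. }
  assert (0 <= (4 * B + 1) ^ 2) by apply pow2_ge_0.
  destruct Hregime as [[HkF2 HD8] | HkFB].
  - assert (Hthin := in_AAk_count_thin kF D k l HkF2 (conj HD0 HD8) Hk Hl Hlk).
    assert (Hscale := thin_shell_scaling alpha C' (INR N) kF D
                        ltac:(lra) HN1 HkF HkN ltac:(lra) ltac:(lra)).
    cbv zeta in Hscale; fold K in Hscale; nra.
  - assert (Hbox := in_AAk_count_box kF D k l HkF HD0 Hl Hlk).
    assert ((4 * (kF + D) + 1) ^ 2 <= (4 * B + 1) ^ 2) by (apply pow_incr; lra).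
    nra.
Qed.
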